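(* Let $\mathcal{R}$ be an orthogonal TRS, $S$ a reduction strongly $p$-converging from $s$ to $t$, and $U$ a set of redex occurrences in $s$. Then $U/S$ is a set of redex occurrences in $t$.
   Context: Orthogonal = left-linear and non-overlapping. Partial terms over $\Sigma_\bot=\Sigma\uplus\{\bot\}$ ordered by $\le_\bot$ (replacing subterms by $\bot$) form a complete semilattice; $\liminf_{\iota\to\alpha}a_\iota=\bigvee_{\beta<\alpha}\bigwedge_{\beta\le\iota<\alpha}a_\iota$. A reduction $S=(t_\iota\to_{\pi_\iota}t_{\iota+1})_{\iota<\alpha}$ with contexts $c_\iota$ ($t_\iota$ with position $\pi_\iota$ replaced by $\bot$) strongly $p$-converges to $t$ if $\liminf_{\iota\to\lambda}c_\iota=t_\lambda$ for every limit $\lambda<\alpha$ and $t$ is the last term (closed) or $t=\liminf_{\iota\to\alpha}c_\iota$ (open). Descendants $U/S$ of a set $U$ of non-$\bot$ positions of $t_0$: for length 0, $U$; for a single step at $\pi$ with rule $l\to r$, each $u\in U$ yields $\{u\}$ if $\pi\not\le u$, $\emptyset$ if $u=\pi\cdot\pi'$ with $\pi'$ a function-symbol position of $l$, and $\{\pi\cdot w'\cdot x\mid r|_{w'}=l|_w\}$ if $u=\pi\cdot w\cdot x$ with $l|_w$ a variable; for successor length $\beta+1$, the descendants by the last step of the descendants by $S|_\beta$; for limit length $\alpha$, $u\in U/S$ iff $u$ is a non-$\bot$ position of $t_\alpha$ and there is $\beta<\alpha$ with $u\in U/(S|_\iota)$ for all $\beta\le\iota<\alpha$. *)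

From mathcomp Require Import all_boot.
Set Implicit Arguments. Unset Strict Implicit. Unset Printing Implicit Defensive.

(** * Partial (possibly infinite) terms over Sigma_bot, as labelled trees on positions *)

Inductive sym (F V : Type) : Type :=
  | SFun of F
  | SVar of V
  | SBot.
Arguments SFun {F V}. Arguments SVar {F V}. Arguments SBot {F V}.

Definition pterm (F V : Type) := seq nat -> option (sym F V).

Section Terms.
Variables (F V : Type) (ar : F -> nat).
Local Notation term := (pterm F V).

Definition wf (t : term) : Prop :=
  t [::] <> None /\
  forall p i, t (rcons p i) <> None <-> exists f, t p = Some (SFun f) /\ i < ar f.

Definition finite_term (t : term) : Prop :=
  exists n, forall p, n <= size p -> t p = None.

Definition no_bot (t : term) : Prop := forall p, t p <> Some SBot.

Definition fin_total (t : term) : Prop := wf t /\ finite_term t /\ no_bot t.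

Definition bot_term : term := fun q => if q is [::] then Some SBot else None.

Definition subterm (t : term) (p : seq nat) : term := fun q => t (p ++ q).

Definition replace (t : term) (p : seq nat) (s : term) : term :=
  fun q => if prefix p q then s (drop (size p) q) else t q.

Fixpoint subst_aux (sigma : V -> term) (t : term) (acc : seq nat) (p : seq nat)
  : option (sym F V) :=
  match t acc with
  | Some (SVar x) => sigma x p
  | _ => match p with
         | [::] => t acc
         | i :: p' => subst_aux sigma t (rcons acc i) p'
         end
  end.
Definition subst (sigma : V -> term) (t : term) : term := subst_aux sigma t [::].

Definition nonbot_pos (t : term) (p : seq nat) : Prop :=
  exists a, t p = Some a /\ a <> SBot.

Definition ple (s t : term) : Prop :=
  forall p a, s p = Some a -> a <> SBot -> t p = Some a.

Definition is_glb (A : term -> Prop) (m : term) : Prop :=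
  wf m /\ (forall a, A a -> ple m a) /\
  (forall m', wf m' -> (forall a, A a -> ple m' a) -> ple m' m).

Definition is_lub (A : term -> Prop) (m : term) : Prop :=
  wf m /\ (forall a, A a -> ple a m) /\
  (forall m', wf m' -> (forall a, A a -> ple a m') -> ple m m').

Record rule := Rule { lhs : term; rhs : term }.

Definition rule_wf (rho : rule) : Prop :=
  fin_total (lhs rho) /\ fin_total (rhs rho) /\
  (exists f, lhs rho [::] = Some (SFun f)) /\
  (forall p x, rhs rho p = Some (SVar x) -> exists q, lhs rho q = Some (SVar x)).

Definition trs := rule -> Prop.

Definition trs_wf (R : trs) : Prop := forall rho, R rho -> rule_wf rho.

Definition left_linear (R : trs) : Prop :=
  forall rho, R rho -> forall p q x,
    lhs rho p = Some (SVar x) -> lhs rho q = Some (SVar x) -> p = q.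

Definition non_overlapping (R : trs) : Prop :=
  forall rho1 rho2, R rho1 -> R rho2 -> forall p f,
    lhs rho1 p = Some (SFun f) ->
    (exists sigma1 sigma2 : V -> term,
        (forall x, fin_total (sigma1 x)) /\ (forall x, fin_total (sigma2 x)) /\
        subst sigma1 (subterm (lhs rho1) p) = subst sigma2 (lhs rho2)) ->
    p = [::] /\ rho1 = rho2.

Definition orthogonal (R : trs) : Prop := left_linear R /\ non_overlapping R.

Definition step (R : trs) (s : term) (pi : seq nat) (rho : rule) (s' : term) : Prop :=
  R rho /\ exists sigma : V -> term, (forall x, wf (sigma x)) /\
    subterm s pi = subst sigma (lhs rho) /\
    s' = replace s pi (subst sigma (rhs rho)).

Definition redex_occ (R : trs) (s : term) (pi : seq nat) : Prop :=
  exists rho (sigma : V -> term), R rho /\ (forall x, wf (sigma x)) /\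
    subterm s pi = subst sigma (lhs rho).

Definition step_desc (rho : rule) (pi : seq nat) (u u' : seq nat) : Prop :=
  (~~ prefix pi u /\ u' = u) \/
  (exists w x w' v, u = pi ++ w ++ x /\ lhs rho w = Some (SVar v) /\
     subterm (rhs rho) w' = subterm (lhs rho) w /\ u' = pi ++ w' ++ x).

End Terms.

(** * Ordinals, represented by well-ordered index types *)
Section Ordinals.
Variables (O : Type) (lt : O -> O -> Prop).

Definition is_wellorder : Prop :=
  (forall x, ~ lt x x) /\ (forall x y z, lt x y -> lt y z -> lt x z) /\
  (forall x y, lt x y \/ x = y \/ lt y x) /\ well_founded lt.

Definition ole (x y : O) : Prop := lt x y \/ x = y.
Definition is_zero (b : O) : Prop := forall o, ~ lt o b.
Definition is_succ (g b : O) : Prop := lt g b /\ forall o, ~ (lt g o /\ lt o b).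
Definition is_limit (b : O) : Prop :=
  (exists o, lt o b) /\ forall o, lt o b -> exists o', lt o o' /\ lt o' b.
End Ordinals.

Section Reductions.
Variables (F V : Type) (ar : F -> nat) (O : Type) (lt : O -> O -> Prop).
Local Notation term := (pterm F V).

Definition is_liminf (c : O -> term) (lam : O) (x : term) : Prop :=
  exists g : O -> term,
    (forall b, lt b lam ->
       is_glb ar (fun a => exists i, ole lt b i /\ lt i lam /\ a = c i) (g b)) /\
    is_lub ar (fun a => exists b, lt b lam /\ a = g b) x.

(** The indices are the elements of a well-ordered type O that are
    <= alpha (O contains alpha itself, so that ts alpha denotes the final
    term).  [ctx i] is the context c_i. *)
Definition ctx (ts : O -> term) (pi : O -> seq nat) (i : O) : term :=
  replace (ts i) (pi i) (@bot_term F V).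

Definition is_reduction (R : trs F V) (alpha : O) (ts : O -> term)
    (pi : O -> seq nat) (rho : O -> rule F V) : Prop :=
  (forall i, ole lt i alpha -> wf ar (ts i)) /\
  (forall i j, lt i alpha -> is_succ lt i j -> step ar R (ts i) (pi i) (rho i) (ts j)).

(** strong p-convergence from s to t: at every limit lam < alpha,
    liminf c = ts lam; the result t is the last term ts alpha if alpha is not
    a limit (closed), or ts alpha = liminf_{i -> alpha} c_i if alpha is a
    limit (open). *)
Definition strongly_p_converges (R : trs F V) (alpha : O) (ts : O -> term)
    (pi : O -> seq nat) (rho : O -> rule F V) (s t : term) : Prop :=
  is_reduction R alpha ts pi rho /\
  (forall z, is_zero lt z -> ts z = s) /\
  (forall lam, ole lt lam alpha -> is_limit lt lam -> is_liminf (ctx ts pi) lam (ts lam)) /\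
  ts alpha = t.

(** descendants U/(S|_b) for b <= alpha, by transfinite recursion
    (as an inductive predicate: desc b u  <->  u \in U/(S|_b)). *)
Inductive desc (alpha : O) (ts : O -> term) (pi : O -> seq nat)
    (rho : O -> rule F V) (U : seq nat -> Prop) : O -> seq nat -> Prop :=
  | desc_zero b u : is_zero lt b -> U u -> desc alpha ts pi rho U b u
  | desc_succ g b u0 u : lt g alpha -> is_succ lt g b ->
      desc alpha ts pi rho U g u0 -> step_desc (rho g) (pi g) u0 u ->
      desc alpha ts pi rho U b u
  | desc_limit b u b0 : ole lt b alpha -> is_limit lt b -> nonbot_pos (ts b) u ->
      lt b0 b ->
      (forall i, ole lt b0 i -> lt i b -> desc alpha ts pi rho U i u) ->
      desc alpha ts pi rho U b u.

End Reductions.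

(* A redex occurrence is the same as an occurrence of the function-symbol pattern of a left-hand
   side, since left-linearity lets the matching substitution be read off the term.  Across a step at
   [pi], a descendant of a redex either lies beside or above [pi] and keeps its pattern, or is a
   copy of a redex inside a variable of the contracted rule; a step strictly inside the pattern
   would make two left-hand sides overlap.  At a limit ordinal, a descendant [u] is a non-bot
   position of the limit, so from some stage on no step occurs above [u]; from then on the pattern
   at [u] can be hit neither from above nor from inside, so it is frozen and survives in the
   liminf. *)

From mathcomp Require Import all_boot zify.
From Stdlib Require Import Classical ClassicalEpsilon FunctionalExtensionality.
From Stdlib Require List.
Set Implicit Arguments. Unset Strict Implicit. Unset Printing Implicit Defensive.

Lemma prefix_cat_ext (T : eqType) (a b c : seq T) : ~~ prefix a b -> prefix a (b ++ c) ->
  exists d, a = b ++ d /\ d <> [::] /\ prefix d c.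
Proof.
elim: b a => [|y b IH] [|z a] //=; first by move=> _ H; exists (z :: a).
move=> /negP Hn /andP [/eqP Ezy Hp]; subst z.
have [|d [-> Hd]] := IH a _ Hp; last by exists d.
by apply/negP => H; apply: Hn; rewrite eqxx H.
Qed.

Lemma prefix_rconsE (T : eqType) (u p : seq T) i :
  prefix u (rcons p i) = (u == rcons p i) || prefix u p.
Proof.
elim: p u => [|y p IH] [|z u] //=; first by rewrite orbF eqseq_cons; case: u.
by rewrite IH eqseq_cons andb_orr.
Qed.

Section Terms.
Variables (F V : Type) (ar : F -> nat).
Local Notation term := (pterm F V).

Definition fun_pos (l : term) p := exists f, l p = Some (SFun f).

Definition var_free_path (l : term) p :=
  forall q r x, p = q ++ r -> l q <> Some (SVar x).

Definition linear (l : term) :=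
  forall p q x, l p = Some (SVar x) -> l q = Some (SVar x) -> p = q.

Definition prefix_closed (Q : seq nat -> Prop) := forall p i, Q (rcons p i) -> Q p.

Lemma wf_fun_pos_strict_prefix (l : term) p q :
  wf ar l -> l (p ++ q) <> None -> q <> [::] -> fun_pos l p.
Proof.
move=> [_ Hw]; elim/last_ind: q => [|q i IH] // Hn _.
move: Hn; rewrite -rcons_cat => /Hw [f [Hf _]].
case: (lastP q) IH Hf => [|q' j] IH Hf; first by exists f; rewrite cats0 in Hf.
by apply: IH; [rewrite Hf | move=> /(congr1 size); rewrite size_rcons].
Qed.

Lemma wf_fun_pos_prefix (l : term) p q :
  wf ar l -> prefix p q -> fun_pos l q -> fun_pos l p.
Proof.
move=> Hw /prefixP [z ->] [f Hf].
case: (eqVneq z [::]) => [Ez|Hz]; first by exists f; rewrite Ez cats0 in Hf.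
by apply: (wf_fun_pos_strict_prefix (q := z)) => //; [rewrite Hf | apply/eqP].
Qed.

Lemma subst_aux_cat (sigma : V -> term) (t : term) acc q r :
  (forall q0 q1, q = q0 ++ q1 -> q1 <> [::] -> forall x, t (acc ++ q0) <> Some (SVar x)) ->
  subst_aux sigma t acc (q ++ r) = subst_aux sigma t (acc ++ q) r.
Proof.
elim: q acc => [|i q IH] acc H; first by rewrite cats0.
have Hacc x : t acc <> Some (SVar x).
  by have := H [::] (i :: q) erefl ltac:(done) x; rewrite cats0.
rewrite cat_cons /= -cat_rcons -IH; last first.
  by move=> q0 q1 E Hq1 x; rewrite cat_rcons; apply: (H (i :: q0) q1 _ Hq1); rewrite E.
by case E: (t acc) => [[f|x|]|] //; case: (Hacc x).
Qed.

Lemma subst_aux_subterm (sigma : V -> term) (t : term) a acc r :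
  subst_aux sigma t (a ++ acc) r = subst_aux sigma (subterm t a) acc r.
Proof. by elim: r acc => [|i r IH] acc //=; rewrite rcons_cat IH. Qed.

Lemma subst_at (sigma : V -> term) (l : term) q r : wf ar l -> l q <> None ->
  subst sigma l (q ++ r) = subst_aux sigma l q r.
Proof.
move=> Hw Hq; rewrite /subst subst_aux_cat // => q0 q1 E Hq1 x /=.
by rewrite E in Hq; have [f ->] := wf_fun_pos_strict_prefix Hw Hq Hq1.
Qed.

Lemma subst_var (sigma : V -> term) (l : term) q r x : wf ar l ->
  l q = Some (SVar x) -> subst sigma l (q ++ r) = sigma x r.
Proof. by move=> Hw Hq; rewrite subst_at ?Hq //; case: r => [|i r] /=; rewrite Hq. Qed.

Lemma subst_var_free (sigma : V -> term) (l : term) p :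
  var_free_path l p -> subst sigma l p = l p.
Proof.
move=> Hv; rewrite /subst -[p]cats0 subst_aux_cat ?cats0 /=; last first.
  by move=> q0 q1 E _ x; apply: (Hv q0 q1 x).
by case E: (l p) => [[g|x|]|] //; case: (Hv p [::] x); rewrite ?cats0.
Qed.

Lemma subst_fun (sigma : V -> term) (l : term) p f : wf ar l ->
  l p = Some (SFun f) -> subst sigma l p = Some (SFun f).
Proof.
move=> Hw Hp; rewrite subst_var_free // => q r x E.
have [g ->] // : fun_pos l q.
by apply: wf_fun_pos_prefix Hw _ (ex_intro _ f Hp); rewrite E prefix_prefix.
Qed.

Lemma subst_subterm (sigma : V -> term) (l : term) p : wf ar l -> l p <> None ->
  subterm (subst sigma l) p = subst sigma (subterm l p).
Proof.
move=> Hw Hp; apply: functional_extensionality => q.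
by rewrite /subterm subst_at // /subst -subst_aux_subterm cats0.
Qed.

Lemma subterm_cat (t : term) p q : subterm t (p ++ q) = subterm (subterm t p) q.
Proof. by apply: functional_extensionality => r; rewrite /subterm catA. Qed.

Lemma wf_subterm (t : term) p : wf ar t -> t p <> None -> wf ar (subterm t p).
Proof.
move=> [_ H] Hp; split; first by rewrite /subterm cats0.
by move=> q i; rewrite /subterm -rcons_cat; apply: H.
Qed.

Lemma fin_total_subterm (t : term) p :
  fin_total ar t -> t p <> None -> fin_total ar (subterm t p).
Proof.
move=> [Hw [[n Hn] Hb]] Hp; split; first exact: wf_subterm.
split; last by move=> q; apply: Hb.
by exists n => q Hq; apply: Hn; rewrite size_cat; apply: leq_trans Hq (leq_addl _ _).
Qed.

Lemma wf_bot_term : wf ar (@bot_term F V).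
Proof. by split => // p i; split => [|[f []]]; case: p. Qed.

Lemma wf_replace_bot (t : term) u :
  wf ar t -> t u <> None -> wf ar (replace t u (@bot_term F V)).
Proof.
move=> [H0 H] Hu; split; first by rewrite /replace; case: ifP => // _; case: (drop _ _).
move=> p i; rewrite /replace prefix_rconsE.
case: (eqVneq u (rcons p i)) => [Eu|Hne] /=.
  have -> : prefix u p = false.
    by apply/negP => /prefixP [z]; rewrite Eu => /(congr1 size); rewrite size_cat size_rcons; lia.
  by rewrite -Eu drop_size; split => // _; apply/H; rewrite -Eu.
case: ifP => Hp; last exact: H.
have -> : drop (size u) (rcons p i) = rcons (drop (size u) p) i.
  by move: Hp => /prefixP [z ->]; rewrite rcons_cat !drop_size_cat.
by split; [case: (drop _ _) | move=> [f []]; case: (drop _ _)].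
Qed.

Lemma nonbot_replace_bot (t : term) p r :
  nonbot_pos (replace t p (@bot_term F V)) r -> ~~ prefix p r.
Proof.
move=> [a []]; rewrite /replace; case: ifP => // _.
by rewrite /bot_term; case: (drop _ _) => // -[<-].
Qed.

Definition pattern_at (t : term) u (l : term) :=
  forall p f, l p = Some (SFun f) -> t (u ++ p) = Some (SFun f).

Lemma pattern_at_subst (t : term) u (l : term) sigma :
  wf ar l -> subterm t u = subst sigma l -> pattern_at t u l.
Proof.
by move=> Hw E p f Hp; rewrite -/(subterm t u p) E; apply: subst_fun.
Qed.

Lemma pattern_at_subterm (t t' : term) u u' (l : term) :
  subterm t u = subterm t' u' -> pattern_at t u l -> pattern_at t' u' l.
Proof. by move=> E H p f /H; rewrite -/(subterm t u p) -/(subterm t' u' p) E. Qed.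

Lemma pattern_at_var_defined (t l : term) u q x :
  wf ar t -> wf ar l -> fun_pos l [::] -> pattern_at t u l ->
  l q = Some (SVar x) -> t (u ++ q) <> None.
Proof.
move=> Ht Hl [f0 Hf0] Hp Hq; case: (lastP q) Hq => [|q0 i] Hq; first by rewrite Hq in Hf0.
have /(Hl.2 q0 i) [f [Hf Hi]] : l (rcons q0 i) <> None by rewrite Hq.
by rewrite -rcons_cat; apply/(Ht.2); exists f; split => //; apply: Hp.
Qed.

Lemma pattern_at_undefined (t l : term) p :
  wf ar t -> wf ar l -> no_bot l -> fun_pos l [::] -> pattern_at t [::] l ->
  var_free_path l p -> l p = None -> t p = None.
Proof.
move=> Ht Hl Hb [f0 Hf0] Hp; elim/last_ind: p => [|p i IH] Hv Hn; first by rewrite Hf0 in Hn.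
case E: (t (rcons p i)) => [a|] //; exfalso.
have [f [Hf Hi]] := (Ht.2 p i).1 ltac:(by rewrite E).
case El: (l p) => [[g|x|]|].
- move: (Hp _ _ El); rewrite /= Hf => -[Efg]; subst g.
  by move: Hn; apply/(Hl.2 p i); exists f.
- by apply: (Hv p [:: i] x); rewrite ?cats1.
- exact: (Hb p).
- suff : t p = None by rewrite Hf.
  by apply: IH El => q r x Ep; apply: (Hv q (rcons r i)); rewrite Ep rcons_cat.
Qed.

Definition pattern_region u (l : term) r := prefix r u \/ exists2 p, r = u ++ p & fun_pos l p.

Lemma pattern_region_prefix_closed u (l : term) : wf ar l -> prefix_closed (pattern_region u l).
Proof.
move=> Hw r i [H|[p Ep [f Hp]]]; first by left; apply: prefix_trans H; apply: prefix_rcons.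
case: (lastP p) Ep Hp => [|p0 j] Ep Hp; first by left; rewrite -(cats0 u) -Ep prefix_rcons.
move: Ep; rewrite -rcons_cat => /rcons_inj [-> _]; right; exists p0 => //.
exact: wf_fun_pos_prefix Hw (prefix_rcons _ _) (ex_intro _ f Hp).
Qed.

Lemma pattern_region_nonbot (t l : term) u r : wf ar t -> fun_pos l [::] ->
  pattern_at t u l -> pattern_region u l r -> nonbot_pos t r.
Proof.
move=> Ht [f0 Hf0] Hpat Hr; suff [f Hf] : fun_pos t r by exists (SFun f).
case: Hr => [H|[p -> [f Hp]]]; last by exists f; apply: Hpat.
by apply: wf_fun_pos_prefix Ht H _; exists f0; rewrite -[u]cats0; apply: Hpat.
Qed.

Lemma pattern_at_agree (t t' l : term) u :
  (forall r, pattern_region u l r -> t' r = t r) -> pattern_at t u l -> pattern_at t' u l.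
Proof. by move=> Ht Hpat p f Hp; rewrite Ht ?(Hpat _ _ Hp) //; right; exists p => //; exists f. Qed.

(* Matches [l] against [T] when [l] is linear; [d] is a junk value for variables not in [l]. *)
Definition matcher (T d l : term) (x : V) : term :=
  match excluded_middle_informative (exists q, l q = Some (SVar x)) with
  | left H => subterm T (proj1_sig (constructive_indefinite_description _ H))
  | right _ => d
  end.

Lemma matcher_var (T d l : term) q x :
  linear l -> l q = Some (SVar x) -> matcher T d l x = subterm T q.
Proof.
move=> Hlin Hq; rewrite /matcher; case: excluded_middle_informative => [H|[]]; last by exists q.
by case: constructive_indefinite_description => q' /= Hq'; rewrite (Hlin _ _ _ Hq' Hq).
Qed.

Lemma matcher_ind (P : term -> Prop) (T d l : term) x : P d ->
  (forall q, l q = Some (SVar x) -> P (subterm T q)) -> P (matcher T d l x).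
Proof.
move=> Hd Hq; rewrite /matcher; case: excluded_middle_informative => // H.
by case: constructive_indefinite_description => q /= /Hq.
Qed.

Lemma subst_matcher (T d l : term) :
  wf ar l -> no_bot l -> linear l -> pattern_at T [::] l ->
  (forall p, var_free_path l p -> l p = None -> T p = None) ->
  subst (matcher T d l) l = T.
Proof.
move=> Hw Hb Hlin Hp Hund; apply: functional_extensionality => p.
case: (classic (exists q r x, p = q ++ r /\ l q = Some (SVar x))) => [[q [r [x [-> Hq]]]]|Hn].
  by rewrite (subst_var _ r Hw Hq) (matcher_var _ _ Hlin Hq).
have Hv : var_free_path l p by move=> q r x E Hq; apply: Hn; exists q, r, x.
rewrite subst_var_free //; case El: (l p) => [[g|x|]|].
- by rewrite (Hp _ _ El).
- by case: (Hv p [::] x); rewrite ?cats0.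
- by case: (Hb p).
- by rewrite Hund.
Qed.

(* [W] truncated just below the prefix-closed region [K]: the children of [K]-positions that are
   defined in [W] are relabelled [a]. *)
Definition prune (W : term) (K : seq nat -> Prop) (a : sym F V) : term := fun p =>
  if excluded_middle_informative (K p) then W p
  else if excluded_middle_informative (exists q i, p = rcons q i /\ K q /\ W p <> None)
  then Some a else None.

Lemma pruneP (W : term) K a p :
  (K p /\ prune W K a p = W p) \/
  (~ K p /\ (exists q i, p = rcons q i /\ K q /\ W p <> None) /\ prune W K a p = Some a) \/
  (~ K p /\ ~ (exists q i, p = rcons q i /\ K q /\ W p <> None) /\ prune W K a p = None).
Proof.
rewrite /prune; case: excluded_middle_informative => Kp; first by left.
by case: excluded_middle_informative => H; right; [left|right].
Qed.

Lemma prune_in (W : term) K a p : K p -> prune W K a p = W p.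
Proof. by case: (pruneP W K a p) => [[]|[[]|[]]]. Qed.

Lemma prune_None (W : term) K a p : W p = None -> prune W K a p = None.
Proof.
by move=> Hn; case: (pruneP W K a p) => [[_ ->]|[[_ [[q [i [_ [_ H]]]] _]]|[_ [_ ->]]]].
Qed.

Lemma prune_Some (W : term) K a p b :
  prune W K a p = Some b -> b <> a -> K p /\ W p = Some b.
Proof. by case: (pruneP W K a p) => [[? ->]|[[_ [_ ->]] [<-]|[_ [_ ->]]]]. Qed.

Lemma prune_rcons_defined (W : term) K a q i :
  K q -> W (rcons q i) <> None -> prune W K a (rcons q i) <> None.
Proof.
move=> Kq Hn; case: (pruneP W K a (rcons q i)) => [[_ ->]|[[_ [_ ->]]|[_ [H _]]]] //.
by case: H; exists q, i.
Qed.

Lemma wf_prune (W : term) K a : wf ar W -> K [::] -> prefix_closed K ->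
  (forall f, a <> SFun f) -> wf ar (prune W K a).
Proof.
move=> HW K0 Kpre Ha; split; first by rewrite prune_in //; case: HW.
move=> p i; split.
- case: (pruneP W K a (rcons p i)) => [[Kpi ->]|[[_ [[q [j [E [Kq Wn]]]] _]]|[_ [_ ->]]]] //.
    by move=> /(HW.2 p i) [f [Hf Hi]]; exists f; rewrite prune_in ?Hf //; apply: Kpre Kpi.
  move: E => /rcons_inj [Eq Ej] _; subst q j; have [f [Hf Hi]] := (HW.2 p i).1 Wn.
  by exists f; rewrite prune_in.
- move=> [f [Hf Hi]].
  have Kp : K p.
    case: (pruneP W K a p) => [[] //|[[_ [_ E]]|[_ [_ E]]]]; rewrite Hf in E => //.
    by case: E => /esym /Ha.
  by apply: prune_rcons_defined => //; apply/(HW.2 p i); exists f; rewrite -(prune_in W a Kp).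
Qed.

Lemma fin_total_prune (W : term) K (v : V) n : wf ar W -> K [::] -> prefix_closed K ->
  (forall p, K p -> fun_pos W p) -> (forall p, K p -> size p < n) ->
  fin_total ar (prune W K (SVar v)).
Proof.
move=> HW K0 Kpre KW Kn; split; first by apply: wf_prune.
split.
- exists n.+1 => p Hp.
  case: (pruneP W K (SVar v) p) => [[/Kn Hs _]|[[_ [[q [i [E [/Kn Hs _]]]] _]]|[_ [_ ->]]]] //.
  + by move: (ltn_trans Hp Hs); rewrite ltnn.
  + by move: Hp; rewrite E size_rcons ltnS leqNgt Hs.
- move=> p; case: (pruneP W K (SVar v) p) => [[/KW [f ->] ->]|[[_ [_ ->]]|[_ [_ ->]]]] //.
Qed.

Lemma prune_instance (l W : term) (sl : V -> term) K (v : V) :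
  wf ar l -> no_bot l -> linear l -> fun_pos l [::] -> (forall x, wf ar (sl x)) ->
  W = subst sl l -> (forall p, fun_pos l p -> K p) -> fin_total ar (prune W K (SVar v)) ->
  exists tl : V -> term, (forall x, fin_total ar (tl x)) /\ subst tl l = prune W K (SVar v).
Proof.
move=> Hw Hb Hlin [f0 Hf0] Hsl El HlK HT; set T := prune _ _ _.
have HTv q x : l q = Some (SVar x) -> T q <> None.
  case: (lastP q) => [|q0 i] Hq; first by rewrite Hq in Hf0.
  have /(Hw.2 q0 i) [g [Hg _]] : l (rcons q0 i) <> None by rewrite Hq.
  apply: prune_rcons_defined; first by apply: HlK; exists g.
  by rewrite El -[rcons q0 i]cats0 (subst_var _ _ Hw Hq); case: (Hsl x).
exists (matcher T T l); split.
  by move=> x; apply: matcher_ind => // q Hq; apply: fin_total_subterm HT (HTv q x Hq).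
apply: subst_matcher => //.
- by move=> p f Hp; rewrite /= /T prune_in ?El ?(subst_fun _ Hw Hp) //; apply: HlK; exists f.
- by move=> p Hv Hn; apply: prune_None; rewrite El subst_var_free.
Qed.

(* Non-overlap only speaks of finite total unifiers.  So the common instance [W] is cut just below
   the union of the function positions of [A] and [B], with a variable at the cut; linearity lets
   both [A] and [B] match this finite total term. *)
Lemma fin_total_unifier (A B W : term) (sA sB : V -> term) :
  fin_total ar A -> fin_total ar B -> linear A -> linear B ->
  fun_pos A [::] -> fun_pos B [::] -> (forall x, wf ar (sA x)) -> (forall x, wf ar (sB x)) ->
  wf ar W -> W = subst sA A -> W = subst sB B ->
  exists tA tB : V -> term, (forall x, fin_total ar (tA x)) /\
    (forall x, fin_total ar (tB x)) /\ subst tA A = subst tB B.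
Proof.
move=> HA HB HlA HlB HA0 HB0 HsA HsB HW EA EB.
have [[HwA [[nA HnA] HbA]] [HwB [[nB HnB] HbB]]] := (HA, HB).
case: (classic (inhabited V)) => [[v0]|HV]; last first.
  have Hvf (l : term) p : var_free_path l p by move=> q r x; case: HV; constructor.
  exists (fun=> A), (fun=> A); do 2!split => //; congr subst.
  by apply: functional_extensionality => p; rewrite -(subst_var_free sA (Hvf A p)) -EA EB
    subst_var_free.
pose K p := fun_pos A p \/ fun_pos B p.
have HT : fin_total ar (prune W K (SVar v0)).
  apply: (@fin_total_prune W K v0 (maxn nA nB)) => //; first by left.
  - by move=> p i [H|H]; [left; apply: wf_fun_pos_prefix HwA _ H |
      right; apply: wf_fun_pos_prefix HwB _ H]; apply: prefix_rcons.
  - by move=> p [] [f Hf]; exists f; [rewrite EA | rewrite EB]; apply: subst_fun Hf.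
  - move=> p [[f Hf]|[f Hf]].
      by case: (ltnP (size p) nA) => [/leq_trans -> //|/HnA]; [apply: leq_maxl | rewrite Hf].
    by case: (ltnP (size p) nB) => [/leq_trans -> //|/HnB]; [apply: leq_maxr | rewrite Hf].
have [tA [HtA EtA]] := prune_instance HwA HbA HlA HA0 HsA EA (fun p H => or_introl H) HT.
have [tB [HtB EtB]] := prune_instance HwB HbB HlB HB0 HsB EB (fun p H => or_intror H) HT.
by exists tA, tB; rewrite EtA EtB.
Qed.

End Terms.

Section Orthogonal.
Variables (F V : Type) (ar : F -> nat) (R : trs F V).
Hypotheses (HRwf : trs_wf ar R) (HRorth : orthogonal ar R).
Local Notation term := (pterm F V).

Lemma wf_lhs rho : R rho -> wf ar (lhs rho).
Proof. by move=> /HRwf [[]]. Qed.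

Lemma wf_rhs rho : R rho -> wf ar (rhs rho).
Proof. by move=> /HRwf [_ [[]]]. Qed.

Lemma lhs_root_fun rho : R rho -> fun_pos (lhs rho) [::].
Proof. by move=> /HRwf [_ [_ []]]. Qed.

Lemma linear_lhs rho : R rho -> linear (lhs rho).
Proof. exact: HRorth.1. Qed.

Lemma pattern_at_instance (t : term) u rho : wf ar t -> R rho -> pattern_at t u (lhs rho) ->
  exists2 sigma : V -> term, (forall x, wf ar (sigma x)) & subterm t u = subst sigma (lhs rho).
Proof.
move=> Ht Hr Hp; have [[Hw [_ Hb]] _] := HRwf Hr.
have [f0 Hf0] := lhs_root_fun Hr.
have Hu : t u <> None by rewrite -[u]cats0 (Hp _ _ Hf0).
exists (matcher (subterm t u) (@bot_term F V) (lhs rho)).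
  move=> x; apply: matcher_ind => [|q Hq]; first exact: wf_bot_term.
  rewrite -/(subterm (subterm t u) q); apply: wf_subterm; first exact: wf_subterm.
  exact: pattern_at_var_defined Ht Hw (lhs_root_fun Hr) Hp Hq.
apply/esym/(subst_matcher _ Hw Hb (linear_lhs Hr) Hp) => p.
exact: (pattern_at_undefined (wf_subterm Ht Hu) Hw Hb (lhs_root_fun Hr) Hp).
Qed.

Lemma redex_occP (t : term) u :
  wf ar t -> redex_occ ar R t u <-> exists2 rho, R rho & pattern_at t u (lhs rho).
Proof.
move=> Ht; split=> [[rho [sigma [Hr [_ E]]]]|[rho Hr Hp]].
  by exists rho => //; apply: pattern_at_subst (wf_lhs Hr) E.
by have [sigma Hs E] := pattern_at_instance Ht Hr Hp; exists rho, sigma.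
Qed.

Lemma redex_inside_pattern (t : term) u p rho : wf ar t -> R rho ->
  pattern_at t u (lhs rho) -> fun_pos (lhs rho) p -> redex_occ ar R t (u ++ p) -> p = [::].
Proof.
move=> Ht Hr Hpat [f Hf] [rho' [s' [Hr' [Hs' E']]]].
have [s Hs E] := pattern_at_instance Ht Hr Hpat.
have [HA HB] := (HRwf Hr, HRwf Hr').
have Hp : lhs rho p <> None by rewrite Hf.
have Hlin : linear (subterm (lhs rho) p).
  by move=> a b x Ha Hb; apply: List.app_inv_head (linear_lhs Hr Ha Hb).
have EW : subterm t (u ++ p) = subst s (subterm (lhs rho) p).
  by rewrite subterm_cat E (subst_subterm _ (wf_lhs Hr) Hp).
have HA0 : fun_pos (subterm (lhs rho) p) [::] by exists f; rewrite /subterm cats0.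
have HW : wf ar (subterm t (u ++ p)) by apply: wf_subterm Ht _; rewrite (Hpat _ _ Hf).
have [tA [tB [HtA [HtB EAB]]]] := fin_total_unifier (fin_total_subterm HA.1 Hp) HB.1 Hlin
  (linear_lhs Hr') HA0 (lhs_root_fun Hr') Hs Hs' HW EW E'.
by have [] := HRorth.2 _ _ Hr Hr' p f Hf (ex_intro _ tA (ex_intro _ tB (conj HtA (conj HtB EAB)))).
Qed.

Lemma step_outside (t t' : term) pi rho q :
  step ar R t pi rho t' -> ~~ prefix pi q -> t' q = t q.
Proof. by move=> [_ [sig [_ [_ ->]]]] Hq; rewrite /replace (negbTE Hq). Qed.

Lemma step_redex_occ (t t' : term) pi rho : step ar R t pi rho t' -> redex_occ ar R t pi.
Proof. by move=> [Hr [sig [Hs [E _]]]]; exists rho, sig. Qed.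

Lemma step_outside_pattern (t t' : term) pi rho u p rho' : wf ar t -> R rho' ->
  pattern_at t u (lhs rho') -> step ar R t pi rho t' -> ~~ prefix pi u ->
  fun_pos (lhs rho') p -> ~~ prefix pi (u ++ p).
Proof.
move=> Ht Hr' Hpat Hst Hnp Hp; apply/negP => Hpp.
have [d [Ed [Hd Hdp]]] := prefix_cat_ext Hnp Hpp.
apply: Hd; apply: (redex_inside_pattern Ht Hr' Hpat).
- exact: wf_fun_pos_prefix (wf_lhs Hr') Hdp Hp.
- by rewrite -Ed; apply: step_redex_occ Hst.
Qed.

Lemma step_var_subterm (t t' : term) pi rho w w' v : step ar R t pi rho t' ->
  lhs rho w = Some (SVar v) -> subterm (rhs rho) w' = subterm (lhs rho) w ->
  subterm t' (pi ++ w') = subterm t (pi ++ w).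
Proof.
move=> [Hr [sig [_ [E ->]]]] Hw Ew'.
have Hw' : rhs rho w' = Some (SVar v).
  by have := congr1 (fun g => g [::]) Ew'; rewrite /subterm !cats0 Hw.
apply: functional_extensionality => q.
rewrite /subterm /replace -!catA prefix_prefix drop_size_cat //.
rewrite (subst_var _ _ (wf_rhs Hr) Hw').
by rewrite -/(subterm t pi (w ++ q)) E (subst_var _ _ (wf_lhs Hr) Hw).
Qed.

Lemma redex_occ_step_desc (t t' : term) pi rho u0 u : wf ar t -> wf ar t' ->
  step ar R t pi rho t' -> redex_occ ar R t u0 -> step_desc rho pi u0 u ->
  redex_occ ar R t' u.
Proof.
move=> Ht Ht' Hst /(redex_occP _ Ht) [rho' Hr' Hpat] Hd.
apply/(redex_occP _ Ht'); exists rho' => //.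
case: Hd => [[Hnp ->]|[w [x [w' [v [Eu0 [Hw [Ew' ->]]]]]]]].
  move=> p f Hp; rewrite (step_outside Hst); first exact: Hpat.
  exact: step_outside_pattern Ht Hr' Hpat Hst Hnp (ex_intro _ f Hp).
apply: pattern_at_subterm Hpat.
by rewrite Eu0 !catA (subterm_cat t) (subterm_cat t') (step_var_subterm Hst Hw Ew').
Qed.

End Orthogonal.

Section Ordinals.
Variables (O : Type) (lt : O -> O -> Prop).
Hypothesis Hwo : is_wellorder lt.

Lemma ord_lt_trans x y z : lt x y -> lt y z -> lt x z.
Proof. exact: Hwo.2.1. Qed.

Lemma ord_lt_total x y : lt x y \/ x = y \/ lt y x.
Proof. exact: Hwo.2.2.1. Qed.

Lemma ord_lt_wf : well_founded lt.
Proof. exact: Hwo.2.2.2. Qed.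

Lemma ole_trans x y z : ole lt x y -> ole lt y z -> ole lt x z.
Proof. by case=> [Hxy|->] // [Hyz|<-]; [left; apply: ord_lt_trans Hyz|left]. Qed.

Lemma lt_ole_trans x y z : lt x y -> ole lt y z -> lt x z.
Proof. by move=> Hxy [Hyz|<-] //; apply: ord_lt_trans Hyz. Qed.

Lemma lt_common_ub x y z : lt x z -> lt y z -> exists2 m, ole lt x m /\ ole lt y m & lt m z.
Proof.
move=> Hx Hy; case: (ord_lt_total x y) => [H|[<-|H]].
- by exists y; [split; [left|right]|].
- by exists x; [split; right|].
- by exists x; [split; [right|left]|].
Qed.

Lemma succ_ole g b a : is_succ lt g b -> lt g a -> ole lt b a.
Proof.
move=> [_ Hn] Hga; case: (ord_lt_total b a) => [H|[->|H]]; [by left|by right|].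
by case: (Hn a).
Qed.

Lemma ole_pred g i b : is_succ lt g i -> lt b i -> ole lt b g.
Proof.
move=> [_ Hn] Hb; case: (ord_lt_total b g) => [H|[->|H]]; [by left|by right|].
by case: (Hn b).
Qed.

Lemma succ_exists j a : lt j a -> exists j', is_succ lt j j'.
Proof.
elim/(well_founded_ind ord_lt_wf): a => a IH Hja.
case: (classic (exists o, lt j o /\ lt o a)) => [[o [Hjo Hoa]]|Hn]; first exact: IH Hoa Hjo.
by exists a; split => // o Ho; apply: Hn; exists o.
Qed.

Lemma succ_or_limit i : (exists o, lt o i) -> (exists g, is_succ lt g i) \/ is_limit lt i.
Proof.
move=> Hex; case: (classic (exists g, is_succ lt g i)) => [H|H]; first by left.
right; split => // o Ho; apply: NNPP => Hn; apply: H; exists o; split => // o' [H1 H2].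
by apply: Hn; exists o'.
Qed.

End Ordinals.

Section Limits.
Variables (O : Type) (lt : O -> O -> Prop) (F V : Type) (ar : F -> nat).
Local Notation term := (pterm F V).

(* Pruning [t1] below [Q] (with [bot] at the cut) gives a lower bound of the [c j] for [j >= b1],
   hence a term below the liminf. *)
Lemma liminf_agree (c : O -> term) lam (x t1 : term) b1 (Q : seq nat -> Prop) :
  is_liminf ar lt c lam x -> lt b1 lam -> wf ar t1 -> Q [::] -> prefix_closed Q ->
  (forall r, Q r -> nonbot_pos t1 r) ->
  (forall j, ole lt b1 j -> lt j lam -> forall r, Q r -> c j r = t1 r) ->
  forall r, Q r -> x r = t1 r.
Proof.
move=> [g [Hglb [_ [Hub _]]]] Hb1 Ht1 Q0 Qpre Qnb Hc r Qr.
pose m := prune t1 Q SBot.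
have Hm : ple m (g b1).
  apply: (Hglb b1 Hb1).2.2; first exact: wf_prune.
  move=> _ [j [Hj1 [Hj2 ->]]] p a /prune_Some H /H [Qp <-].
  exact: Hc.
have [a [Ha Hna]] := Qnb r Qr.
by rewrite Ha; apply: (Hub (g b1)) => //; [exists b1 | apply: Hm; rewrite // /m prune_in].
Qed.

Lemma liminf_nonbot_eventually (c : O -> term) lam (x : term) u :
  is_liminf ar lt c lam x -> nonbot_pos x u ->
  exists2 b, lt b lam & forall j, ole lt b j -> lt j lam -> nonbot_pos (c j) u.
Proof.
move=> [g [Hglb [Hwx [Hub Hleast]]]] [a [Hxu Ha]]; apply: NNPP => Hn.
suff : ple x (replace x u (@bot_term F V)).
  by move=> /(_ u a Hxu Ha); rewrite /replace prefix_refl drop_size => -[Ea]; rewrite Ea in Ha.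
apply: Hleast; first by apply: wf_replace_bot Hwx _; rewrite Hxu.
move=> _ [b [Hb ->]] p a0 Hp Hnb; rewrite /replace; case: ifP => Hpre.
  exfalso; apply: Hn; exists b => // j Hj1 Hj2.
  have [a1 [Ha1 Hna1]] : nonbot_pos (g b) u.
    move: Hpre => /prefixP [z Ez].
    case: (eqVneq z [::]) => [Ez0|Hz]; first by exists a0; rewrite Ez Ez0 cats0 in Hp.
    have [f Hf] : fun_pos (g b) u.
      by apply: (wf_fun_pos_strict_prefix (q := z) (Hglb b Hb).1); [rewrite -Ez Hp | apply/eqP].
    by exists (SFun f).
  by exists a1; split => //; apply: (Hglb b Hb).2.1 => //; exists j.
by apply: (Hub (g b)) => //; exists b.
Qed.

End Limits.

Section Reduction.
Variables (F V : Type) (ar : F -> nat) (R : trs F V) (O : Type) (lt : O -> O -> Prop)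
  (alpha : O) (ts : O -> pterm F V) (pi : O -> seq nat) (rho : O -> rule F V).
Hypotheses (HRwf : trs_wf ar R) (HRorth : orthogonal ar R) (Hwo : is_wellorder lt)
  (Hred : is_reduction ar lt R alpha ts pi rho)
  (Hlim : forall lam, ole lt lam alpha -> is_limit lt lam ->
     is_liminf ar lt (ctx ts pi) lam (ts lam)).

Lemma wf_ts i : ole lt i alpha -> wf ar (ts i).
Proof. exact: Hred.1. Qed.

Lemma frozen_region b0 b (Q : seq nat -> Prop) :
  ole lt b alpha -> Q [::] -> prefix_closed Q -> (forall r, Q r -> nonbot_pos (ts b0) r) ->
  (forall j, ole lt b0 j -> lt j b -> (forall r, Q r -> ts j r = ts b0 r) ->
     forall r, Q r -> ~~ prefix (pi j) r) ->
  forall i, ole lt b0 i -> ole lt i b -> forall r, Q r -> ts i r = ts b0 r.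
Proof.
move=> Hb Q0 Qpre Qnb Hout i; elim/(well_founded_ind (ord_lt_wf Hwo)): i => i IH.
case=> [Hi|<-] // Hib; have Hia := ole_trans Hwo Hib Hb.
have Hagree j : ole lt b0 j -> lt j i -> forall r, Q r -> ctx ts pi j r = ts b0 r.
  move=> Hj1 Hj2 r Qr; have Hjb := lt_ole_trans Hwo Hj2 Hib.
  have IHj := IH j Hj2 Hj1 (or_introl Hjb).
  by rewrite /ctx /replace (negbTE (Hout j Hj1 Hjb IHj r Qr)) IHj.
case: (succ_or_limit (ex_intro _ b0 Hi)) => [[g Hg]|Hl].
  have [Hgi Hgb0] := (Hg.1, ole_pred Hwo Hg Hi).
  have Hgb := lt_ole_trans Hwo Hgi Hib.
  have IHg := IH g Hgi Hgb0 (or_introl Hgb).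
  move=> r Qr; rewrite -(IHg r Qr).
  exact: (step_outside (Hred.2 g i (lt_ole_trans Hwo Hgi Hia) Hg) (Hout g Hgb0 Hgb IHg r Qr)).
have Hwb0 := wf_ts (ole_trans Hwo (or_introl Hi) Hia).
exact: (liminf_agree (Hlim Hia Hl) Hi Hwb0 Q0 Qpre Qnb Hagree).
Qed.

(* Once [u] is non-bot in all contexts, the pattern of the redex at [u] lies in a region that no
   later step can touch: a step inside it would overlap that redex. *)
Lemma redex_occ_limit b b0 u : ole lt b alpha -> is_limit lt b -> nonbot_pos (ts b) u ->
  lt b0 b -> (forall i, ole lt b0 i -> lt i b -> redex_occ ar R (ts i) u) ->
  redex_occ ar R (ts b) u.
Proof.
move=> Hb Hl Hnb Hb0 IH.
have [b1 Hb1 Hnb1] := liminf_nonbot_eventually (Hlim Hb Hl) Hnb.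
have [b2 [H02 H12] Hb2] := lt_common_ub Hwo Hb0 Hb1.
have Hja j : lt j b -> ole lt j alpha := fun Hj => or_introl (lt_ole_trans Hwo Hj Hb).
have [rh Hrh Hpat] := (redex_occP HRwf HRorth _ (wf_ts (Hja b2 Hb2))).1 (IH b2 H02 Hb2).
pose Q := pattern_region u (lhs rh).
have Hout j : ole lt b2 j -> lt j b -> (forall r, Q r -> ts j r = ts b2 r) ->
    forall r, Q r -> ~~ prefix (pi j) r.
  move=> Hj1 Hj2 Hj r Qr.
  have Hnu : ~~ prefix (pi j) u.
    exact: nonbot_replace_bot (Hnb1 j (ole_trans Hwo H12 Hj1) Hj2).
  case: Qr => [H|[p -> Hp]]; first by apply: contra Hnu => /prefix_trans; apply.
  have [j' Hj'] := succ_exists Hwo (lt_ole_trans Hwo Hj2 Hb).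
  have Hst := Hred.2 j j' (lt_ole_trans Hwo Hj2 Hb) Hj'.
  exact: (step_outside_pattern HRwf HRorth (wf_ts (Hja j Hj2)) Hrh (pattern_at_agree Hj Hpat)
    Hst Hnu Hp).
have Qnb r : Q r -> nonbot_pos (ts b2) r.
  exact: pattern_region_nonbot (wf_ts (Hja b2 Hb2)) (lhs_root_fun HRwf Hrh) Hpat.
have Qpre : prefix_closed Q := pattern_region_prefix_closed (wf_lhs HRwf Hrh).
apply/(redex_occP HRwf HRorth _ (wf_ts Hb)); exists rh => //; apply: pattern_at_agree Hpat.
exact: (frozen_region (Q := Q) Hb (or_introl (prefix0s u)) Qpre Qnb Hout
  (or_introl Hb2) (or_intror erefl)).
Qed.

End Reduction.

Theorem proposition5p10 (F V : Type) (ar : F -> nat) (R : trs F V)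
    (O : Type) (lt : O -> O -> Prop) (alpha : O)
    (ts : O -> pterm F V) (pi : O -> seq nat) (rho : O -> rule F V)
    (s t : pterm F V) (U : seq nat -> Prop) :
  trs_wf ar R -> orthogonal ar R ->
  is_wellorder lt ->
  strongly_p_converges ar lt R alpha ts pi rho s t ->
  (forall u, U u -> redex_occ ar R s u) ->
  forall u, desc lt alpha ts pi rho U alpha u -> redex_occ ar R t u.
Proof.
move=> HRwf HRorth Hwo [Hred [Hzero [Hlim <-]]] HU u.
elim=> {u} [b u /Hzero -> /HU //|g b u0 u Hg Hgb _ IH Hd|b u b0 Hb Hl Hnb Hb0 _ IH].
- apply: (redex_occ_step_desc HRwf HRorth _ _ (Hred.2 g b Hg Hgb) IH Hd).
  + exact: Hred.1 (or_introl Hg).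
  + exact: Hred.1 (succ_ole Hwo Hgb Hg).
- exact: (redex_occ_limit HRwf HRorth Hwo Hred Hlim Hb Hl Hnb Hb0 IH).
Qed.
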